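(* Let $X$ be a geodesic metric space, $e\in X$, and $N\le N'$ Morse gauges. For $x,y\in\partial_s X^{(N)}_e$ (regarded also as points of $\partial_s X^{(N')}_e$ via the inclusion $X^{(N)}_e\subseteq X^{(N')}_e$), \[(x\cdot_N y)_e\le (x\cdot_{N'} y)_e\le (x\cdot_N y)_e+32N'(3,0).\]
   Context: A Morse gauge is a function $N$ assigning to each $(K,C)$ a number $N(K,C)\ge0$; $N\le N'$ means pointwise. A geodesic is $N$-Morse if every $(K,C)$-quasi-geodesic with endpoints on it lies in its $N(K,C)$-neighbourhood. $X^{(N)}_e$ is the set of points joined to $e$ by an $N$-Morse geodesic (restricted metric); it is hyperbolic. Its sequential boundary $\partial_s X^{(N)}_e$ consists of equivalence classes of sequences $(x_n)$ in $X^{(N)}_e$ with $(x_i\cdot x_j)_e\to\infty$, where $(a\cdot b)_e=\frac12(d(e,a)+d(e,b)-d(a,b))$ and $(x_n)\sim(y_m)$ iff $(x_i\cdot y_j)_e\to\infty$. The $N$-Gromov product $(x\cdot_N y)_e$ of $x,y\in\partial_s X^{(N)}_e$ is the supremum of $\liminf_{m,n\to\infty}(x_n\cdot y_m)_e$ over all pairs of sequences $(x_n),(y_m)\subseteq X^{(N)}_e$ representing $x$ and $y$. *)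

From HB Require Import structures.
From mathcomp Require Import all_boot all_order all_algebra.
From mathcomp Require Import all_classical all_reals ereal.
Set Implicit Arguments. Unset Strict Implicit. Unset Printing Implicit Defensive.
Import Order.TTheory GRing.Theory Num.Theory.
Local Open Scope ring_scope.
Local Open Scope classical_set_scope.

Section MorseDefs.
Variables (R : realType) (X : Type) (d : X -> X -> R).

Definition is_metric : Prop :=
  (forall x y, 0 <= d x y) /\ (forall x y, d x y = 0 <-> x = y) /\
  (forall x y, d x y = d y x) /\ (forall x y z, d x z <= d x y + d y z).

Definition is_geodesic (gamma : R -> X) (L : R) : Prop :=
  0 <= L /\ forall s t, 0 <= s <= L -> 0 <= t <= L -> d (gamma s) (gamma t) = `|s - t|.

Definition geodesic_space : Prop :=
  forall x y, exists gamma : R -> X,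
    is_geodesic gamma (d x y) /\ gamma 0 = x /\ gamma (d x y) = y.

Definition on_geod (gamma : R -> X) (L : R) (p : X) : Prop :=
  exists s, 0 <= s <= L /\ gamma s = p.

Definition quasi_geodesic (K C : R) (q : R -> X) (a b : R) : Prop :=
  a <= b /\ forall s t, a <= s <= b -> a <= t <= b ->
    K^-1 * `|s - t| - C <= d (q s) (q t) /\ d (q s) (q t) <= K * `|s - t| + C.

Definition morse_gauge (N : R -> R -> R) : Prop :=
  forall K C, 1 <= K -> 0 <= C -> 0 <= N K C.

Definition gauge_le (N N' : R -> R -> R) : Prop :=
  forall K C, 1 <= K -> 0 <= C -> N K C <= N' K C.

Definition morse (N : R -> R -> R) (gamma : R -> X) (L : R) : Prop :=
  forall K C, 1 <= K -> 0 <= C ->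
  forall (q : R -> X) (a b : R), quasi_geodesic K C q a b ->
    on_geod gamma L (q a) -> on_geod gamma L (q b) ->
    forall t, a <= t <= b -> exists s, 0 <= s <= L /\ d (q t) (gamma s) <= N K C.

Definition XN (N : R -> R -> R) (e : X) (x : X) : Prop :=
  exists (gamma : R -> X) (L : R), is_geodesic gamma L /\ gamma 0 = e /\ gamma L = x
    /\ morse N gamma L.

Definition gprod (e a b : X) : R := (d e a + d e b - d a b) / 2.

Definition tends_infty2 (f : nat -> nat -> R) : Prop :=
  forall M : R, exists n0 : nat, forall i j : nat, (n0 <= i)%N -> (n0 <= j)%N -> M < f i j.

Definition gromov_seq (N : R -> R -> R) (e : X) (u : nat -> X) : Prop :=
  (forall n, XN N e (u n)) /\ tends_infty2 (fun i j => gprod e (u i) (u j)).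

Definition seq_equiv (e : X) (u v : nat -> X) : Prop :=
  tends_infty2 (fun i j => gprod e (u i) (v j)).

(* the point of the sequential boundary of X^(N)_e represented by u:
   its equivalence class *)
Definition bclass (N : R -> R -> R) (e : X) (u : nat -> X) : set (nat -> X) :=
  [set v | gromov_seq N e v /\ seq_equiv e v u].

Definition liminf2 (f : nat -> nat -> R) : \bar R :=
  ereal_sup (range (fun k : nat =>
    ereal_inf [set z | exists m n : nat, (k <= m)%N /\ (k <= n)%N /\ z = (f m n)%:E])).

Definition gprodN (e : X) (x y : set (nat -> X)) : \bar R :=
  ereal_sup [set l | exists u v : nat -> X, x u /\ y v /\
                      l = liminf2 (fun m n => gprod e (u n) (v m))].

End MorseDefs.

From HB Require Import structures.
From mathcomp Require Import all_boot all_order all_algebra.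
From mathcomp Require Import all_classical all_reals ereal.
From mathcomp Require Import topology normedtype derive.
From mathcomp Require Import lra.
Import Order.TTheory GRing.Theory Num.Theory numFieldNormedType.Exports.
Set Implicit Arguments. Unset Strict Implicit.

(* Two N-Morse geodesics from e to x and y fellow-travel up to time (x.y)_e:
   if p is a point of a geodesic [x,y] closest to e, then [e,p] followed by
   [p,x] is a (3,0)-quasi-geodesic with endpoints on the Morse geodesic [e,x],
   so [e,p] stays 2N(3,0)-close to [e,x] at equal times, and likewise for y.
   This yields the four-point condition
   (x.z)_e >= min((x.y)_e, (y.z)_e) - 4N(3,0) on X^(N)_e, and two applications
   of it compare the Gromov products along any N'-representatives of two
   boundary points with those along the given N-representatives, up to
   8N'(3,0).  The first inequality is immediate since every N-representative
   is an N'-representative. *)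

Local Open Scope ring_scope.
Local Open Scope classical_set_scope.

Lemma distr_le (R : numDomainType) (s t : R) : s <= t -> `|s - t| = t - s.
Proof. by move=> st; rewrite distrC ger0_norm // subr_ge0. Qed.

Lemma lipschitz1_within_continuous (R : realType) (A : set R) (f : R -> R) :
  (forall u v, A u -> A v -> `|f u - f v| <= `|u - v|) ->
  {within A, continuous f}.
Proof.
move=> f_lip; apply/subspace_continuousP => x Ax.
apply/cvgrPdist_lt => eps eps_gt0; rewrite near_withinE.
near=> y => Ay; apply: le_lt_trans (f_lip x y Ax Ay) _; near: y.
exact: (@cvgr_dist_lt _ _ _ (nbhs x) _ id x (@cvg_id _ _) eps eps_gt0).
Unshelve. all: by end_near.
Qed.

Lemma liminf2_ge (R : realType) (f : nat -> nat -> R) (K : nat) (r : R) :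
  (forall m n, (K <= m)%N -> (K <= n)%N -> r <= f m n) -> (r%:E <= liminf2 f)%E.
Proof.
move=> f_ge; apply: le_trans (ereal_sup_ubound (ex_intro2 _ _ K Logic.I erefl)).
by apply/ereal_infP => _ [m [n [Km [Kn ->]]]]; rewrite lee_fin f_ge.
Qed.

Lemma liminf2_le_addr (R : realType) (f g : nat -> nat -> R) (c : R) :
  (forall k r, (forall m n, (k <= m)%N -> (k <= n)%N -> r <= f m n) ->
    exists K, forall m n, (K <= m)%N -> (K <= n)%N -> r - c <= g m n) ->
  (liminf2 f <= liminf2 g + c%:E)%E.
Proof.
move=> shift; apply/ereal_supP => _ [k _ <-]; set tail_inf := ereal_inf _.
have tail_le m n : (k <= m)%N -> (k <= n)%N -> (tail_inf <= (f m n)%:E)%E.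
  by move=> km kn; apply: ereal_inf_lbound; exists m, n.
case E : tail_inf => [r| |]; last by rewrite leNye.
- have [K g_ge] := shift k r (fun m n km kn => ltac:(by rewrite -lee_fin -E tail_le)).
  by rewrite -leeBlDr // -EFinB; apply: liminf2_ge g_ge.
- by have := tail_le k k (leqnn k) (leqnn k); rewrite E leye_eq.
Qed.

Section GeodesicSpace.
Variables (R : realType) (X : Type) (d : X -> X -> R).

Lemma XN_mono (N N' : R -> R -> R) (e x : X) :
  gauge_le N N' -> XN d N e x -> XN d N' e x.
Proof.
move=> NN' [g [L [g_geo [g0 [gL g_morse]]]]]; exists g, L; do 3 split => //.
move=> K C K1 C0 q a b q_qg qa qb t tI.
have [s [sI near_s]] := g_morse K C K1 C0 q a b q_qg qa qb t tI.
by exists s; split => //; apply: le_trans near_s (NN' K C K1 C0).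
Qed.

Lemma bclass_mono (N N' : R -> R -> R) (e : X) (u : nat -> X) :
  gauge_le N N' -> bclass d N e u `<=` bclass d N' e u.
Proof.
by move=> NN' v [[Xv v_conv] v_u]; do 2 split => //; move=> n; apply: XN_mono (Xv n).
Qed.

Lemma bclass_self (N : R -> R -> R) (e : X) (u : nat -> X) :
  gromov_seq d N e u -> bclass d N e u u.
Proof. by move=> u_seq; split => //; apply: u_seq.2. Qed.

Lemma geodesic_dist0 (g : R -> X) (L t : R) :
  is_geodesic d g L -> 0 <= t <= L -> d (g 0) (g t) = t.
Proof.
move=> [L_ge0 g_iso] /andP[t_ge0 t_le]; rewrite g_iso ?lexx ?t_ge0 ?t_le //.
by rewrite distr_le // subr0.
Qed.

Lemma geodesic_distL (g : R -> X) (L t : R) :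
  is_geodesic d g L -> 0 <= t <= L -> d (g t) (g L) = L - t.
Proof.
move=> [L_ge0 g_iso] /andP[t_ge0 t_le].
by rewrite g_iso ?lexx ?t_ge0 ?t_le ?L_ge0 // distr_le.
Qed.

Lemma geodesic_length (g : R -> X) (L : R) :
  is_geodesic d g L -> d (g 0) (g L) = L.
Proof. by move=> g_geo; rewrite (geodesic_dist0 g_geo) // g_geo.1 lexx. Qed.

Lemma geodesic_rev (g : R -> X) (L u : R) :
  is_geodesic d g L -> 0 <= u <= L -> is_geodesic d (fun b => g (u - b)) u.
Proof.
move=> [L_ge0 g_iso] /andP[u_ge0 u_le]; split=> // a b /andP[a0 aL] /andP[b0 bL].
rewrite g_iso; last 2 first.
- by apply/andP; split; lra.
- by apply/andP; split; lra.
have -> : u - a - (u - b) = b - a by lra.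
by rewrite distrC.
Qed.

Lemma geodesic_shift (g : R -> X) (L u : R) :
  is_geodesic d g L -> 0 <= u <= L -> is_geodesic d (fun b => g (u + b)) (L - u).
Proof.
move=> [L_ge0 g_iso] /andP[u_ge0 u_le]; split; first lra.
move=> a b /andP[a0 aL] /andP[b0 bL]; rewrite g_iso; last 2 first.
- by apply/andP; split; lra.
- by apply/andP; split; lra.
by have -> : u + a - (u + b) = a - b by lra.
Qed.

Hypothesis d_metric : is_metric d.

Let d_ge0 : forall x y, 0 <= d x y := d_metric.1.
Let dC : forall x y, d x y = d y x := d_metric.2.2.1.
Let d_triangle : forall x y z, d x z <= d x y + d y z := d_metric.2.2.2.

Lemma ler_dist_metric (p a b : X) : `|d p a - d p b| <= d a b.
Proof.
rewrite ler_norml; have := d_triangle p a b; have := d_triangle p b a.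
rewrite (dC b a) => h1 h2; apply/andP; split; lra.
Qed.

Lemma geodesic_closest_point (g : R -> X) (L : R) (p : X) :
  is_geodesic d g L -> exists2 u0, 0 <= u0 <= L &
    forall u, 0 <= u <= L -> d p (g u0) <= d p (g u).
Proof.
move=> g_geo; have [L_ge0 g_iso] := g_geo.
have dg_cont : {within `[0, L], continuous (fun u => d p (g u))}.
  apply: lipschitz1_within_continuous => u v; rewrite /= !in_itv /= => uI vI.
  by rewrite -(g_iso u v) //; apply: ler_dist_metric.
have [u0 u0I u0_min] := EVT_min L_ge0 dg_cont.
exists u0; first by move: u0I; rewrite in_itv.
by move=> u uI; apply: u0_min; rewrite in_itv.
Qed.

Definition concat (g tau : R -> X) (h t : R) : X :=
  if t <= h then g t else tau (t - h).

Section Concatenation.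
Variables (g tau : R -> X) (h l : R).
Hypotheses (g_geo : is_geodesic d g h) (tau_geo : is_geodesic d tau l).
Hypothesis g_tau : g h = tau 0.
(* g h = tau 0 is a point of tau closest to g 0. *)
Hypothesis tau_far : forall b, 0 <= b <= l -> h <= d (g 0) (tau b).

Lemma concat0 : concat g tau h 0 = g 0.
Proof. by rewrite /concat g_geo.1. Qed.

Lemma concat_end : concat g tau h (h + l) = tau l.
Proof.
rewrite /concat gerDl; have [l_ge0 _] := tau_geo.
case: (leP l 0) => [l_le0|_]; last by rewrite addrC addKr.
have -> : l = 0 by lra.
by rewrite addr0 g_tau.
Qed.

Lemma concat_cross_dist (s b : R) : 0 <= s <= h -> 0 <= b <= l ->
  (h - s + b) / 3 <= d (g s) (tau b) <= h - s + b.
Proof.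
move=> sI bI; have far := tau_far bI.
have gs_tau0 : d (g s) (tau 0) = h - s by rewrite -g_tau (geodesic_distL g_geo).
have up := d_triangle (g s) (tau 0) (tau b).
have low_g0 := d_triangle (g 0) (g s) (tau b).
have low_tau0 := d_triangle (tau 0) (g s) (tau b).
rewrite gs_tau0 (geodesic_dist0 tau_geo bI) in up.
rewrite (geodesic_dist0 g_geo sI) in low_g0.
rewrite (dC (tau 0) (g s)) gs_tau0 (geodesic_dist0 tau_geo bI) in low_tau0.
apply/andP; split; lra.
Qed.

Lemma concat_quasi_geodesic : quasi_geodesic d 3 0 (concat g tau h) 0 (h + l).
Proof.
have [h_ge0 g_iso] := g_geo; have [l_ge0 tau_iso] := tau_geo.
split=> [|s t]; first lra.
wlog st : s t / s <= t => [wlog_st sI tI|/andP[s_ge0 s_le] /andP[t_ge0 t_le]].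
  case: (leP s t) => [st|/ltW ts]; first exact: wlog_st.
  by rewrite distrC dC; apply: wlog_st.
rewrite distr_le // /concat; case: (leP t h) => th.
  rewrite (le_trans st th) g_iso ?distr_le //; last 2 first.
  - by apply/andP; split; lra.
  - by apply/andP; split; lra.
  by split; lra.
case: (leP s h) => sh.
  have /andP[] : (h - s + (t - h)) / 3 <= d (g s) (tau (t - h)) <= h - s + (t - h).
    by apply: concat_cross_dist; apply/andP; split; lra.
  by move=> *; split; lra.
rewrite tau_iso; last 2 first.
- by apply/andP; split; lra.
- by apply/andP; split; lra.
rewrite distr_le; last lra.
by split; lra.
Qed.

End Concatenation.

Lemma geodesic_near_same_time (ga : R -> X) (L : R) (p : X) (s D : R) :
  is_geodesic d ga L -> d (ga 0) p <= L -> 0 <= s <= L -> d p (ga s) <= D ->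
  d p (ga (d (ga 0) p)) <= 2 * D.
Proof.
move=> ga_geo pL sI ps_le; have [_ ga_iso] := ga_geo.
set t := d (ga 0) p; have tI : 0 <= t <= L by rewrite d_ge0.
have st_le : `|s - t| <= D.
  have := ler_dist_metric (ga 0) (ga s) p.
  by rewrite (geodesic_dist0 ga_geo sI) (dC (ga s) p); lra.
by have := d_triangle p (ga s) (ga t); rewrite ga_iso //; lra.
Qed.

Lemma morse_concat_fellow_travel (N : R -> R -> R) (g tau ga : R -> X) (h l L : R) :
  is_geodesic d g h -> is_geodesic d tau l -> g h = tau 0 ->
  (forall b, 0 <= b <= l -> h <= d (g 0) (tau b)) ->
  is_geodesic d ga L -> ga 0 = g 0 -> ga L = tau l -> morse d N ga L ->
  forall t, 0 <= t <= h -> d (g t) (ga t) <= 2 * N 3 0.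
Proof.
move=> g_geo tau_geo g_tau tau_far ga_geo ga0 gaL ga_morse t /andP[t_ge0 t_le].
have [h_ge0 _] := g_geo; have [l_ge0 _] := tau_geo; have [L_ge0 _] := ga_geo.
have h_le_L : h <= L.
  by rewrite -(geodesic_length ga_geo) ga0 gaL tau_far // l_ge0 lexx.
have start : on_geod ga L (concat g tau h 0).
  by exists 0; rewrite concat0 // lexx L_ge0.
have finish : on_geod ga L (concat g tau h (h + l)).
  by exists L; rewrite concat_end // lexx L_ge0.
have tI : 0 <= t <= h + l by apply/andP; split; lra.
have [s [sI]] := ga_morse 3 0 ltac:(lra) (lexx 0) _ _ _
  (concat_quasi_geodesic g_geo tau_geo g_tau tau_far) start finish t tI.
rewrite /concat t_le => near_s.
have := geodesic_near_same_time ga_geo _ sI near_s.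
by rewrite ga0 (geodesic_dist0 g_geo) ?t_ge0 ?t_le //; apply; lra.
Qed.

Lemma gprod_ge0 (e x y : X) : 0 <= gprod d e x y.
Proof. by rewrite /gprod; have := d_triangle x e y; rewrite (dC x e); lra. Qed.

Lemma gprodC (e x y : X) : gprod d e x y = gprod d e y x.
Proof. by rewrite /gprod (dC x y) (addrC (d e x)). Qed.

Lemma gprod_le_distl (e x y : X) : gprod d e x y <= d e x.
Proof. by rewrite /gprod; have := d_triangle e x y; lra. Qed.

Lemma gprod_le_dist_between (e x y z : X) :
  d x z + d z y = d x y -> gprod d e x y <= d e z.
Proof.
move=> xzy; rewrite /gprod.
by have := d_triangle e z x; have := d_triangle e z y; rewrite (dC z x); lra.
Qed.

Hypothesis d_geodesic : geodesic_space d.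

Lemma morse_geodesics_fellow_travel (N : R -> R -> R) (gx gy : R -> X) (Lx Ly : R) :
  is_geodesic d gx Lx -> morse d N gx Lx ->
  is_geodesic d gy Ly -> morse d N gy Ly -> gx 0 = gy 0 ->
  forall t, 0 <= t <= gprod d (gx 0) (gx Lx) (gy Ly) -> d (gx t) (gy t) <= 4 * N 3 0.
Proof.
move=> gx_geo gx_morse gy_geo gy_morse gxy0 t /andP[t_ge0 t_le].
set e := gx 0 in gxy0 t_le *; set x := gx Lx in t_le; set y := gy Ly in t_le.
have [s [s_geo [s0 sL]]] := d_geodesic x y.
have [u0 u0I u0_closest] := geodesic_closest_point e s_geo.
have [g [g_geo [g0 gh]]] := d_geodesic e (s u0).
set h := d e (s u0) in g_geo gh u0_closest.
have [dxy_ge0 _] := s_geo; have /andP[u0_ge0 u0_le] := u0I.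
have gprod_le_h : gprod d e x y <= h.
  apply: gprod_le_dist_between.
  by rewrite -{1}s0 -{1}sL (geodesic_dist0 s_geo u0I) (geodesic_distL s_geo u0I) addrC subrK.
have far b : 0 <= b <= d x y -> h <= d (g 0) (s b) by rewrite g0; apply: u0_closest.
have gx_close : forall t, 0 <= t <= h -> d (g t) (gx t) <= 2 * N 3 0.
  apply: (morse_concat_fellow_travel g_geo (geodesic_rev s_geo u0I)) gx_geo _ _ gx_morse.
  - by rewrite subr0.
  - by move=> b /andP[b0 bu]; apply: far; apply/andP; split; lra.
  - by rewrite g0.
  - by rewrite subrr s0.
have gy_close : forall t, 0 <= t <= h -> d (g t) (gy t) <= 2 * N 3 0.
  apply: (morse_concat_fellow_travel g_geo (geodesic_shift s_geo u0I)) gy_geo _ _ gy_morse.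
  - by rewrite addr0.
  - by move=> b /andP[b0 bu]; apply: far; apply/andP; split; lra.
  - by rewrite -gxy0 g0.
  - by rewrite addrC subrK sL.
have tI : 0 <= t <= h by apply/andP; split; lra.
have := d_triangle (gx t) (g t) (gy t); rewrite (dC (gx t) (g t)).
by have := gx_close t tI; have := gy_close t tI; lra.
Qed.

Lemma gprod_four_point (N : R -> R -> R) (e x y z : X) (M : R) :
  morse_gauge N -> XN d N e x -> XN d N e y -> XN d N e z ->
  M <= gprod d e x y -> M <= gprod d e y z -> M - 4 * N 3 0 <= gprod d e x z.
Proof.
move=> N_gauge [gx [Lx [gx_geo [gx0 [gxL gx_morse]]]]]
  [gy [Ly [gy_geo [gy0 [gyL gy_morse]]]]] [gz [Lz [gz_geo [gz0 [gzL gz_morse]]]]] Mxy Myz.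
have N_ge0 : 0 <= N 3 0 by apply: N_gauge; lra.
have [M_le0|M_gt0] := leP M 0; first by have := gprod_ge0 e x z; lra.
have := morse_geodesics_fellow_travel gx_geo gx_morse gy_geo gy_morse.
rewrite gx0 gy0 gxL gyL => /(_ erefl M) xy_close.
have := morse_geodesics_fellow_travel gy_geo gy_morse gz_geo gz_morse.
rewrite gy0 gz0 gyL gzL => /(_ erefl M) yz_close.
have dex : d e x = Lx by rewrite -gx0 -gxL geodesic_length.
have dez : d e z = Lz by rewrite -gz0 -gzL geodesic_length.
have := gprod_le_distl e x y; have := gprod_le_distl e z y; rewrite gprodC => Mx Mz.
have MxI : 0 <= M <= Lx by apply/andP; split; lra.
have MzI : 0 <= M <= Lz by apply/andP; split; lra.
have xM : d (gx M) x = Lx - M by rewrite -gxL geodesic_distL.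
have zM : d (gz M) z = Lz - M by rewrite -gzL geodesic_distL.
have := d_triangle x (gx M) z; have := d_triangle (gx M) (gz M) z.
have := d_triangle (gx M) (gy M) (gz M).
rewrite (dC x (gx M)) xM zM /gprod dex dez.
have := xy_close (ltac:(apply/andP; split; lra)).
have := yz_close (ltac:(apply/andP; split; lra)).
lra.
Qed.

Lemma liminf2_gprod_le (N : R -> R -> R) (e : X) (a b u v : nat -> X) :
  morse_gauge N -> (forall n, XN d N e (a n)) -> (forall n, XN d N e (b n)) ->
  (forall n, XN d N e (u n)) -> (forall n, XN d N e (v n)) ->
  seq_equiv d e a u -> seq_equiv d e b v ->
  (liminf2 (fun m n => gprod d e (a n) (b m)) <=
   liminf2 (fun m n => gprod d e (u n) (v m)) + (8 * N 3 0)%:E)%E.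
Proof.
move=> N_gauge Xa Xb Xu Xv a_u b_v; apply: liminf2_le_addr => k r ab_ge.
have N_ge0 : 0 <= N 3 0 by apply: N_gauge; lra.
have [n1 au_gt] := a_u r; have [n2 bv_gt] := b_v r.
exists (maxn k (maxn n1 n2)) => m n; set K := maxn _ _ => Km Kn.
have [kK n1K n2K] : [/\ (k <= K)%N, (n1 <= K)%N & (n2 <= K)%N].
  by rewrite !leq_max !leqnn !orbT.
have av : r - 4 * N 3 0 <= gprod d e (a K) (v m).
  apply: gprod_four_point N_gauge (Xa K) (Xb K) (Xv m) (ab_ge K K kK kK) _.
  exact/ltW/bv_gt/(leq_trans n2K).
have ua : r - 4 * N 3 0 <= gprod d e (u n) (a K).
  by rewrite gprodC; have := au_gt K n n1K (leq_trans n1K Kn); lra.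
by have := gprod_four_point N_gauge (Xu n) (Xa K) (Xv m) ua av; lra.
Qed.

End GeodesicSpace.

Unset Implicit Arguments.

Theorem lemma3p11 (R : realType) (X : Type) (d : X -> X -> R)
  (Hmet : is_metric d) (Hgeo : geodesic_space d) (e : X)
  (N N' : R -> R -> R) (HN : morse_gauge N) (HN' : morse_gauge N')
  (HNN' : gauge_le N N')
  (u v : nat -> X) (Hu : gromov_seq d N e u) (Hv : gromov_seq d N e v) :
  (gprodN d e (bclass d N e u) (bclass d N e v)
     <= gprodN d e (bclass d N' e u) (bclass d N' e v))%E /\
  (gprodN d e (bclass d N' e u) (bclass d N' e v)
     <= gprodN d e (bclass d N e u) (bclass d N e v) + (32 * N' 3 0)%:E)%E.
Proof.
split.
  apply: ereal_sup_le => _ [a [b [ua [vb ->]]]].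
  by exists a, b; do 2 (split; first exact: (bclass_mono HNN')).
apply/ereal_supP => _ [a [b [[[Xa _] a_u] [[[Xb _] b_v] ->]]]].
have Xu' n : XN d N' e (u n) by apply: XN_mono HNN' (Hu.1 n).
have Xv' n : XN d N' e (v n) by apply: XN_mono HNN' (Hv.1 n).
move/le_trans: (liminf2_gprod_le Hmet Hgeo HN' Xa Xb Xu' Xv' a_u b_v); apply.
apply: leeD; last by rewrite lee_fin; have := HN' 3 0; lra.
by apply: ereal_sup_ubound; exists u, v; do 2 (split; first exact: bclass_self).
Qed.
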